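(* The locus of the Nagel point $X_8$ (triangle center function $h=\dfrac{s_2+s_3-s_1}{s_1}$) over the 3-periodics of $E$ is the ellipse $x^2/a_8^2+y^2/b_8^2=1$ with $a_8=\dfrac{(b^2-\delta)^2}{a\,c^2}$, $b_8=\dfrac{(a^2-\delta)^2}{b\,c^2}$.
   Context: Fix real numbers $a>b>0$, let $E$ be the ellipse $x^2/a^2+y^2/b^2=1$, $c^2=a^2-b^2$ and $\delta=\sqrt{a^4-a^2b^2+b^4}$. A 3-periodic is a non-degenerate triangle $P_1P_2P_3$ with all vertices on $E$ such that at each vertex $P_j$ the normal line to $E$ at $P_j$ bisects the interior angle of the triangle at $P_j$. For a triangle let $s_1=|P_2P_3|$, $s_2=|P_3P_1|$, $s_3=|P_1P_2|$. Given a triangle center function $h(s_1,s_2,s_3)$, the center $X_h$ is the point with trilinears $p:q:r=h(s_1,s_2,s_3):h(s_2,s_3,s_1):h(s_3,s_1,s_2)$, i.e. the Cartesian point $\dfrac{p s_1P_1+q s_2P_2+r s_3P_3}{p s_1+q s_2+r s_3}$. The locus of $X_h$ is the set of points $X_h(T)$ over all 3-periodics $T$. *)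

From Stdlib Require Import Reals.
Open Scope R_scope.

Definition pt := (R * R)%type.

Definition on_ellipse (a b : R) (P : pt) : Prop :=
  (fst P)^2 / a^2 + (snd P)^2 / b^2 = 1.

Definition dist (P Q : pt) : R :=
  sqrt ((fst P - fst Q)^2 + (snd P - snd Q)^2).

Definition cross3 (P Q S : pt) : R :=
  (fst Q - fst P) * (snd S - snd P) - (snd Q - snd P) * (fst S - fst P).

Definition non_degenerate (P1 P2 P3 : pt) : Prop := cross3 P1 P2 P3 <> 0.

(* The normal line to E at P (direction (x/a^2, y/b^2)) is parallel to the
   interior angle bisector at P of the angle QPS, whose direction is
   u_Q + u_S, u_Q, u_S the unit vectors from P towards Q and S. *)
Definition normal_bisects (a b : R) (P Q S : pt) : Prop :=
  let nx := fst P / a^2 in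
  let ny := snd P / b^2 in
  let wx := (fst Q - fst P) / dist P Q + (fst S - fst P) / dist P S in
  let wy := (snd Q - snd P) / dist P Q + (snd S - snd P) / dist P S in
  nx * wy - ny * wx = 0.

Definition three_periodic (a b : R) (P1 P2 P3 : pt) : Prop :=
  non_degenerate P1 P2 P3 /\
  on_ellipse a b P1 /\ on_ellipse a b P2 /\ on_ellipse a b P3 /\
  normal_bisects a b P1 P2 P3 /\ normal_bisects a b P2 P3 P1 /\
  normal_bisects a b P3 P1 P2.

(* Triangle center with trilinears h(s1,s2,s3) : h(s2,s3,s1) : h(s3,s1,s2),
   as the Cartesian point (p s1 P1 + q s2 P2 + r s3 P3)/(p s1 + q s2 + r s3). *)
Definition center (h : R -> R -> R -> R) (P1 P2 P3 : pt) : pt :=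
  let s1 := dist P2 P3 in
  let s2 := dist P3 P1 in
  let s3 := dist P1 P2 in
  let p := h s1 s2 s3 in
  let q := h s2 s3 s1 in
  let r := h s3 s1 s2 in
  let w := p * s1 + q * s2 + r * s3 in
  ((p * s1 * fst P1 + q * s2 * fst P2 + r * s3 * fst P3) / w,
   (p * s1 * snd P1 + q * s2 * snd P2 + r * s3 * snd P3) / w).

Definition nagel_h (s1 s2 s3 : R) : R := (s2 + s3 - s1) / s1.

Definition locus (a b : R) (h : R -> R -> R -> R) (X : pt) : Prop :=
  exists P1 P2 P3 : pt, three_periodic a b P1 P2 P3 /\ center h P1 P2 P3 = X.

Definition delta (a b : R) : R := sqrt (a^4 - a^2 * b^2 + b^4).
Definition csq (a b : R) : R := a^2 - b^2.

(* Write the vertices as [P_j = (a Re z_j, b Im z_j)] with [|z_j| = 1]. The normal at [P_i]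
   dotted with [P_j - P_i] is [- gap z_i z_j], where [gap z w = |z - w|^2 / 2], so the three
   bisector conditions say that the ratios [gap z_i z_j / |P_i P_j|] share a common value [r].
   As [|P_i P_j|^2 = gap z_i z_j * (a^2 + b^2 - c^2 Re (z_i z_j))], each pair of vertices then
   satisfies one symmetric biquadratic relation, and three distinct solutions of it force
   [z1 + z2 + z3 = - k z1 z2 z3] and [z1 z2 + z2 z3 + z3 z1 = - k], where [k = r^2 c^2] is the
   positive root of [k^2 + 2 (a^2 + b^2) k / c^2 = 3]. The Nagel weights [s2 + s3 - s1] are
   proportional to sums of gaps, and these relations turn the Nagel point into
   [(a k (1 + k) / (3 - k) Re s, b k (1 - k) / (3 + k) Im s)] with [s = z1 z2 z3].
   Conversely, for every unit [s] the cubic [z^3 + k s z^2 - k z - s] has three distinct roots on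
   the unit circle (intermediate value theorem on the argument), and they form a 3-periodic. *)

From Stdlib Require Import Reals Lra Psatz Nsatz.
From Coquelicot Require Import Complex.
Open Scope R_scope.

(* [nsatz] does not see through [pow]. *)
Ltac nsatz_pow := cbn [pow] in *; nsatz.

(** * Chords of the ellipse *)

Definition on_circle (z : C) : Prop := Re z ^ 2 + Im z ^ 2 = 1.

Definition ell (a b : R) (z : C) : pt := (a * Re z, b * Im z).

(* Half the squared chord [|z - w|^2 / 2] for [z], [w] on the unit circle. *)
Definition gap (z w : C) : R := 1 - (Re z * Re w + Im z * Im w).

Definition chord_weight (a b : R) (z w : C) : R :=
  a^2 + b^2 - (a^2 - b^2) * Re (z * w).

Lemma gap_sym z w : gap w z = gap z w.
Proof. unfold gap; ring. Qed.

Lemma gap_half_sq z w : on_circle z -> on_circle w ->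
  gap z w = ((Re z - Re w)^2 + (Im z - Im w)^2) / 2.
Proof. unfold on_circle, gap; intros; nra. Qed.

Lemma sum_sq_pos x y : (x, y) <> (0, 0) -> 0 < x^2 + y^2.
Proof.
  intro H; destruct (Req_dec x 0) as [->|Hx]; [destruct (Req_dec y 0) as [->|Hy]|].
  - congruence.
  - pose proof (Rsqr_pos_lt y Hy); unfold Rsqr in *; nra.
  - pose proof (Rsqr_pos_lt x Hx); unfold Rsqr in *; nra.
Qed.

Lemma gap_pos z w : on_circle z -> on_circle w -> z <> w -> 0 < gap z w.
Proof.
  intros Hz Hw Hne; rewrite gap_half_sq by assumption.
  enough (0 < (Re z - Re w)^2 + (Im z - Im w)^2) by lra.
  apply sum_sq_pos; destruct z as [x y], w as [x' y']; cbn [Re Im fst snd].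
  intro E; injection E; intros; apply Hne; f_equal; lra.
Qed.

Lemma dist_sq P Q : dist P Q ^ 2 = (fst P - fst Q)^2 + (snd P - snd Q)^2.
Proof.
  unfold dist; rewrite pow2_sqrt; [reflexivity|].
  apply Rplus_le_le_0_compat; apply pow2_ge_0.
Qed.

Lemma dist_sym P Q : dist P Q = dist Q P.
Proof. unfold dist; f_equal; ring. Qed.

Lemma dist_pos P Q : P <> Q -> 0 < dist P Q.
Proof.
  intro H; apply sqrt_lt_R0, sum_sq_pos; destruct P as [x y], Q as [x' y']; cbn [fst snd].
  intro E; injection E; intros; apply H; f_equal; lra.
Qed.

Lemma cross3_rot P Q S : cross3 Q S P = cross3 P Q S.
Proof. unfold cross3; ring. Qed.

Lemma on_ellipse_iff_ell a b P : 0 < a -> 0 < b ->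
  on_ellipse a b P <-> exists z, on_circle z /\ P = ell a b z.
Proof.
  intros ha hb; unfold on_ellipse, on_circle, ell; split.
  - intro H; exists (fst P / a, snd P / b); cbn [Re Im fst snd]; split.
    + rewrite <- H; field; lra.
    + destruct P; cbn [Re Im fst snd]; f_equal; field; lra.
  - intros [z [Hz ->]]; cbn [Re Im fst snd]; rewrite <- Hz; field; lra.
Qed.

Lemma dist_ell_sq a b z w : on_circle z -> on_circle w ->
  dist (ell a b z) (ell a b w) ^ 2 = gap z w * chord_weight a b z w.
Proof.
  unfold on_circle, gap, chord_weight, ell; intros Hz Hw; rewrite dist_sq; cbn [Re Im fst snd].
  destruct z as [x y], w as [x' y']; cbn [Re Im fst snd Cmult] in *; nsatz_pow.
Qed.

Lemma ell_normal_dot a b z w : a <> 0 -> b <> 0 -> on_circle z ->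
  fst (ell a b z) / a^2 * (fst (ell a b w) - fst (ell a b z)) +
  snd (ell a b z) / b^2 * (snd (ell a b w) - snd (ell a b z)) = - gap z w.
Proof.
  unfold on_circle, gap, ell; intros ha hb Hz; cbn [Re Im fst snd].
  transitivity (Re z * Re w + Im z * Im w - (Re z ^ 2 + Im z ^ 2)); [field; auto|].
  rewrite Hz; ring.
Qed.

Lemma cross3_ell_sq a b z1 z2 z3 : on_circle z1 -> on_circle z2 -> on_circle z3 ->
  cross3 (ell a b z1) (ell a b z2) (ell a b z3) ^ 2 =
  2 * (a * b)^2 * gap z1 z2 * gap z1 z3 * gap z2 z3.
Proof.
  unfold on_circle, gap, cross3, ell; intros H1 H2 H3; cbn [Re Im fst snd].
  destruct z1 as [x1 y1], z2 as [x2 y2], z3 as [x3 y3]; cbn [Re Im fst snd] in *; nsatz_pow.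
Qed.

(** * The bisector condition *)

Lemma bisector_iff_equal_projections nx ny ux uy vx vy :
  ux^2 + uy^2 = 1 -> vx^2 + vy^2 = 1 -> ux * vy - uy * vx <> 0 ->
  nx * (uy + vy) - ny * (ux + vx) = 0 <-> nx * ux + ny * uy = nx * vx + ny * vy.
Proof.
  intros Hu Hv Huv.
  (* [u + v] and [u - v] are orthogonal, and their cross product is [2 (u x v)] *)
  assert (Key : (nx * (ux - vx) + ny * (uy - vy)) * ((ux + vx)^2 + (uy + vy)^2) =
                2 * (ux * vy - uy * vx) * (nx * (uy + vy) - ny * (ux + vx))) by nsatz_pow.
  assert (Hw : (ux + vx)^2 + (uy + vy)^2 <> 0).
  { intro H0; apply Huv.
    replace vx with (- ux) by nra; replace vy with (- uy) by nra; ring. }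
  split; intro H.
  - rewrite H, Rmult_0_r in Key.
    apply Rmult_integral in Key as [Key|Key]; [lra | contradiction].
  - replace (nx * (ux - vx) + ny * (uy - vy)) with 0 in Key by lra.
    symmetry in Key; rewrite Rmult_0_l in Key.
    apply Rmult_integral in Key as [Key|Key]; [lra | exact Key].
Qed.

Lemma cross3_neq_left P Q S : cross3 P Q S <> 0 -> P <> Q.
Proof. intros H ->; apply H; unfold cross3; ring. Qed.

Lemma cross3_neq_right P Q S : cross3 P Q S <> 0 -> P <> S.
Proof. intros H ->; apply H; unfold cross3; ring. Qed.

Lemma normal_bisects_iff a b P Q S : cross3 P Q S <> 0 ->
  normal_bisects a b P Q S <->
  (fst P / a^2 * (fst Q - fst P) + snd P / b^2 * (snd Q - snd P)) / dist P Q =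
  (fst P / a^2 * (fst S - fst P) + snd P / b^2 * (snd S - snd P)) / dist P S.
Proof.
  intro Hc; unfold normal_bisects; cbv zeta.
  pose proof (dist_pos _ _ (cross3_neq_left _ _ _ Hc)) as HQ.
  pose proof (dist_pos _ _ (cross3_neq_right _ _ _ Hc)) as HS.
  pose proof (dist_sq Q P) as EQ; pose proof (dist_sq S P) as ES.
  rewrite (dist_sym Q P) in EQ; rewrite (dist_sym S P) in ES.
  set (dQ := dist P Q) in *; set (dS := dist P S) in *.
  assert (Unit : forall x y d, 0 < d -> d^2 = x^2 + y^2 -> (x / d)^2 + (y / d)^2 = 1).
  { intros x y d Hd E.
    replace ((x / d)^2 + (y / d)^2) with ((x^2 + y^2) / d^2) by (field; lra).
    rewrite <- E; field; lra. }
  assert (Hcr : (fst Q - fst P) / dQ * ((snd S - snd P) / dS) -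
                (snd Q - snd P) / dQ * ((fst S - fst P) / dS) <> 0).
  { replace (_ - _) with (cross3 P Q S / (dQ * dS)) by (unfold cross3; field; lra).
    unfold Rdiv; apply Rmult_integral_contrapositive_currified; [exact Hc|].
    apply Rinv_neq_0_compat; nra. }
  rewrite (bisector_iff_equal_projections _ _ _ _ _ _ (Unit _ _ _ HQ EQ) (Unit _ _ _ HS ES) Hcr).
  replace ((fst P / a^2 * (fst Q - fst P) + snd P / b^2 * (snd Q - snd P)) / dQ) with
    (fst P / a^2 * ((fst Q - fst P) / dQ) + snd P / b^2 * ((snd Q - snd P) / dQ)) by (unfold Rdiv; ring).
  replace ((fst P / a^2 * (fst S - fst P) + snd P / b^2 * (snd S - snd P)) / dS) with
    (fst P / a^2 * ((fst S - fst P) / dS) + snd P / b^2 * ((snd S - snd P) / dS)) by (unfold Rdiv; ring).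
  reflexivity.
Qed.

Definition gap_ratio (a b : R) (z w : C) : R := gap z w / dist (ell a b z) (ell a b w).

Lemma gap_ratio_sym a b z w : gap_ratio a b w z = gap_ratio a b z w.
Proof. unfold gap_ratio; rewrite gap_sym, dist_sym; reflexivity. Qed.

Lemma normal_bisects_ell_iff a b z1 z2 z3 : a <> 0 -> b <> 0 -> on_circle z1 ->
  cross3 (ell a b z1) (ell a b z2) (ell a b z3) <> 0 ->
  normal_bisects a b (ell a b z1) (ell a b z2) (ell a b z3) <->
  gap_ratio a b z1 z2 = gap_ratio a b z1 z3.
Proof.
  intros ha hb Hz1 Hc; rewrite normal_bisects_iff by exact Hc.
  rewrite !ell_normal_dot by assumption; unfold gap_ratio, Rdiv.
  split; intro H; lra.
Qed.

Lemma three_periodic_ell_iff_ratios a b z1 z2 z3 : 0 < a -> 0 < b ->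
  on_circle z1 -> on_circle z2 -> on_circle z3 ->
  cross3 (ell a b z1) (ell a b z2) (ell a b z3) <> 0 ->
  three_periodic a b (ell a b z1) (ell a b z2) (ell a b z3) <->
  gap_ratio a b z1 z3 = gap_ratio a b z1 z2 /\ gap_ratio a b z2 z3 = gap_ratio a b z1 z2.
Proof.
  intros ha hb H1 H2 H3 Hc.
  assert (Hc2 := Hc); rewrite <- cross3_rot in Hc2.
  assert (Hc3 := Hc2); rewrite <- cross3_rot in Hc3.
  assert (Ell : forall z, on_circle z -> on_ellipse a b (ell a b z))
    by (intros z Hz; apply on_ellipse_iff_ell; eauto).
  unfold three_periodic.
  rewrite (normal_bisects_ell_iff a b z1 z2 z3), (normal_bisects_ell_iff a b z2 z3 z1),
    (normal_bisects_ell_iff a b z3 z1 z2) by (assumption || lra).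
  rewrite (gap_ratio_sym a b z1 z2), (gap_ratio_sym a b z1 z3), (gap_ratio_sym a b z2 z3).
  split.
  - intros (_ & _ & _ & _ & E1 & E2 & _); split; congruence.
  - intros [E1 E2]; repeat split; auto; congruence.
Qed.

Lemma ell_injective a b z w : a <> 0 -> b <> 0 -> ell a b z = ell a b w -> z = w.
Proof.
  intros ha hb E; injection E; intros Ey Ex; destruct z as [x y], w as [x' y'].
  cbn in Ex, Ey; f_equal; [apply (Rmult_eq_reg_l a) | apply (Rmult_eq_reg_l b)]; assumption.
Qed.

Lemma gap_ratio_iff a b z w r : a <> 0 -> b <> 0 -> on_circle z -> on_circle w -> z <> w -> 0 < r ->
  gap_ratio a b z w = r <-> gap z w = r^2 * chord_weight a b z w.
Proof.
  intros ha hb Hz Hw Hne Hr; unfold gap_ratio.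
  pose proof (gap_pos _ _ Hz Hw Hne) as Hg.
  assert (Hd : 0 < dist (ell a b z) (ell a b w))
    by (apply dist_pos; intro E; apply Hne; exact (ell_injective _ _ _ _ ha hb E)).
  pose proof (dist_ell_sq a b _ _ Hz Hw) as D.
  set (g := gap z w) in *; set (d := dist _ _) in *; set (W := chord_weight a b z w) in *.
  split; intro H.
  - apply (Rmult_eq_reg_l g); [|lra].
    replace g with (r * d) at 1 2 by (rewrite <- H; field; lra).
    replace (r * d * (r * d)) with (r^2 * d^2) by ring; rewrite D; ring.
  - assert (Hdg : d = g / r).
    { apply Rsqr_inj; [lra | apply Rlt_le, Rdiv_lt_0_compat; assumption |].
      unfold Rsqr; replace (d * d) with (d^2) by ring; rewrite D, H; field; lra. }
    rewrite Hdg; field; lra.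
Qed.

(** * The billiard constant *)

(* The positive root of [k^2 + 2 (a^2 + b^2) / c^2 k = 3]. *)
Definition billiard_k (a b : R) : R := (2 * delta a b - a^2 - b^2) / (a^2 - b^2).

Lemma delta_sq a b : delta a b ^ 2 = a^4 - a^2 * b^2 + b^4.
Proof.
  unfold delta; rewrite pow2_sqrt; [reflexivity|].
  pose proof (pow2_ge_0 (a^2 - b^2)); pose proof (pow2_ge_0 (a * b)); nra.
Qed.

Lemma delta_bounds a b : 0 < b -> b < a ->
  b^2 < delta a b < a^2 /\ a^2 + b^2 < 2 * delta a b.
Proof.
  intros hb hab; pose proof (delta_sq a b) as D; pose proof (sqrt_pos (a^4 - a^2 * b^2 + b^4)) as D0.
  fold (delta a b) in D0; set (d := delta a b) in *.
  assert (Hc : 0 < a^2 - b^2) by nra.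
  assert (0 < a^2 * (a^2 - b^2)) by (apply Rmult_lt_0_compat; nra).
  assert (0 < b^2 * (a^2 - b^2)) by (apply Rmult_lt_0_compat; nra).
  assert (0 < (a^2 - b^2)^2) by (apply pow_lt; exact Hc).
  repeat split; nra.
Qed.

Section BilliardConstant.
Variables a b : R.
Hypotheses (hb : 0 < b) (hab : b < a).

Let d := delta a b.
Let k := billiard_k a b.

Lemma billiard_k_bounds : 0 < k < 1.
Proof.
  destruct (delta_bounds a b hb hab) as [[Hb Ha] H2]; fold d in Hb, Ha, H2.
  assert (0 < a^2 - b^2) by nra.
  unfold k, billiard_k; fold d; split.
  - apply Rdiv_lt_0_compat; lra.
  - apply (Rmult_lt_reg_r (a^2 - b^2)); [lra|].
    unfold Rdiv; rewrite Rmult_assoc, Rinv_l; lra.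
Qed.

Lemma billiard_k_spec be : 0 < be ->
  be^2 + 2 * (a^2 + b^2) / (a^2 - b^2) * be = 3 <-> be = k.
Proof.
  intro Hbe; pose proof (delta_sq a b) as D; fold d in D.
  assert (Hc : 0 < a^2 - b^2) by nra.
  assert (Hk : k^2 + 2 * (a^2 + b^2) / (a^2 - b^2) * k = 3).
  { unfold k, billiard_k; fold d; apply Rminus_diag_uniq.
    transitivity (4 * (d^2 - (a^4 - a^2 * b^2 + b^4)) / (a^2 - b^2)^2); [field; lra|].
    rewrite D; field; lra. }
  split; intro H; [|subst be; exact Hk].
  pose proof billiard_k_bounds.
  assert (0 < 2 * (a^2 + b^2) / (a^2 - b^2)) by (apply Rdiv_lt_0_compat; nra).
  assert (F : (be - k) * (be + k + 2 * (a^2 + b^2) / (a^2 - b^2)) = 0) by nra.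
  apply Rmult_integral in F as [F|F]; lra.
Qed.

Lemma billiard_semiaxis_x :
  (b^2 - delta a b)^2 / (a * csq a b) = a * k * (1 + k) / (3 - k).
Proof.
  pose proof (delta_sq a b) as D; destruct (delta_bounds a b hb hab) as [[Hb Ha] H2].
  fold d in D, Hb, Ha, H2; fold d; unfold k, billiard_k, csq; fold d.
  assert (a^2 * (2 * d - a^2 - b^2) = (d - b^2) * (2 * a^2 - b^2 - d)) by nra.
  field_simplify_eq; [nra | repeat split; nra].
Qed.

Lemma billiard_semiaxis_y :
  (a^2 - delta a b)^2 / (b * csq a b) = b * k * (1 - k) / (3 + k).
Proof.
  pose proof (delta_sq a b) as D; destruct (delta_bounds a b hb hab) as [[Hb Ha] H2].
  fold d in D, Hb, Ha, H2; fold d; unfold k, billiard_k, csq; fold d.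
  assert (b^2 * (2 * d - a^2 - b^2) = (a^2 - d) * (a^2 - 2 * b^2 + d)) by nra.
  field_simplify_eq; [nra | repeat split; nra].
Qed.

End BilliardConstant.

(** * The vertex relations *)

Lemma Cmult_cancel_l (u v : C) : u <> 0 -> (u * v)%C = 0 -> v = 0.
Proof. intros Hu H; replace v with (/ u * (u * v))%C by (field; exact Hu); rewrite H; ring. Qed.

Lemma Cmult_sub_cancel_l (u v x : C) : u <> v -> ((u - v) * x)%C = 0 -> x = 0.
Proof.
  intro Huv; apply Cmult_cancel_l; intro E; apply Huv.
  replace u with (u - v + v)%C by ring; rewrite E; ring.
Qed.

Lemma on_circle_neq_0 z : on_circle z -> z <> 0.
Proof. unfold on_circle; intros Hz ->; cbn in Hz; lra. Qed.

Lemma Cinv_on_circle z : on_circle z -> (/ z)%C = Cconj z.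
Proof.
  unfold on_circle; destruct z as [x y]; cbn [Re Im fst snd]; intro H.
  unfold Cinv, Cconj; cbn [fst snd].
  rewrite H; f_equal; field.
Qed.

Lemma Ceq_of_sub (u v : C) : (u - v)%C = 0 -> u = v.
Proof. intro H; replace u with (u - v + v)%C by ring; rewrite H; ring. Qed.

Open Scope C_scope.

Definition pair_poly (al be : R) (z w : C) : C :=
  z * z + w * w - be * z * z * w * w - (2 * al)%R * z * w - be.

Lemma pair_poly_sym al be z w : pair_poly al be w z = pair_poly al be z w.
Proof. unfold pair_poly; ring. Qed.

Lemma pair_poly_ell a b rho z w : on_circle z -> on_circle w ->
  pair_poly (1 - rho * (a^2 + b^2)) (rho * (a^2 - b^2)) z w =
  RtoC (-2) * z * w * (gap z w - rho * chord_weight a b z w)%R.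
Proof.
  unfold on_circle, pair_poly, gap, chord_weight; destruct z as [x y], w as [x' y']; intros Hz Hw.
  cbv [Cmult Cplus Cminus Copp RtoC Re Im fst snd] in *.
  f_equal; nsatz_pow.
Qed.

Lemma pair_poly_ell_eq_0_iff a b rho z w : on_circle z -> on_circle w ->
  pair_poly (1 - rho * (a^2 + b^2)) (rho * (a^2 - b^2)) z w = 0 <->
  gap z w = (rho * chord_weight a b z w)%R.
Proof.
  intros Hz Hw; rewrite pair_poly_ell by assumption; split; intro H.
  - apply Cmult_cancel_l in H.
    + apply RtoC_inj in H; lra.
    + repeat apply Cmult_neq_0; try (apply on_circle_neq_0; assumption).
      intro E; apply RtoC_inj in E; lra.
  - rewrite H, Rminus_diag; ring.
Qed.

(* The vertices [z1, z2, z3] of a 3-periodic are the roots of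
   [z^3 + k s z^2 - k z - s] with [s = z1 z2 z3]. *)
Definition billiard_triple (k : R) (z1 z2 z3 : C) : Prop :=
  z1 + z2 + z3 = - k * (z1 * z2 * z3) /\ z1 * z2 + z2 * z3 + z3 * z1 = - k.

Lemma billiard_triple_rot k z1 z2 z3 :
  billiard_triple k z1 z2 z3 -> billiard_triple k z2 z3 z1.
Proof.
  intros [E1 E2]; split.
  - replace (z2 + z3 + z1) with (z1 + z2 + z3) by ring; rewrite E1; ring.
  - rewrite <- E2; ring.
Qed.

Lemma pair_poly_sub al be z w w' :
  pair_poly al be z w - pair_poly al be z w' =
  (w - w') * ((1 - be * z * z) * (w + w') - (2 * al)%R * z).
Proof. unfold pair_poly; ring. Qed.

Lemma billiard_triple_of_pair_polys al be z1 z2 z3 :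
  z1 <> z2 -> z1 <> z3 -> z2 <> z3 ->
  pair_poly al be z1 z2 = 0 -> pair_poly al be z1 z3 = 0 -> pair_poly al be z2 z3 = 0 ->
  billiard_triple be z1 z2 z3 /\ (1 + 2 * al = be ^ 2)%R.
Proof.
  intros d12 d13 d23 F12 F13 F23.
  set (L z w w' := (1 - be * z * z) * (w + w') - (2 * al)%R * z).
  assert (HL : forall z w w', w <> w' -> pair_poly al be z w = 0 -> pair_poly al be z w' = 0 ->
            L z w w' = 0).
  { intros z w w' Hne Fw Fw'; apply (Cmult_sub_cancel_l w w'); [exact Hne|].
    unfold L; rewrite <- pair_poly_sub, Fw, Fw'; ring. }
  assert (F21 : pair_poly al be z2 z1 = 0) by (rewrite pair_poly_sym; exact F12).
  assert (F31 : pair_poly al be z3 z1 = 0) by (rewrite pair_poly_sym; exact F13).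
  assert (F32 : pair_poly al be z3 z2 = 0) by (rewrite pair_poly_sym; exact F23).
  pose proof (HL z1 z2 z3 d23 F12 F13) as L1.
  pose proof (HL z2 z1 z3 d13 F21 F23) as L2.
  pose proof (HL z3 z1 z2 d12 F31 F32) as L3.
  assert (K : 1 + be * (z1 * z2 + z2 * z3 + z3 * z1) + (2 * al)%R = 0).
  { apply (Cmult_sub_cancel_l z2 z1); [congruence|].
    transitivity (L z1 z2 z3 - L z2 z1 z3); [unfold L; rewrite RtoC_mult; ring|].
    rewrite L1, L2; ring. }
  assert (E1 : z1 + z2 + z3 = - be * (z1 * z2 * z3)).
  { apply Ceq_of_sub, (Cmult_cancel_l (RtoC 3)); [intro E; apply RtoC_inj in E; lra|].
    transitivity (L z1 z2 z3 + L z2 z1 z3 + L z3 z1 z2 +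
                  (z1 + z2 + z3) * (1 + be * (z1 * z2 + z2 * z3 + z3 * z1) + (2 * al)%R)).
    - unfold L; rewrite !RtoC_mult; replace (RtoC 3) with (1 + 1 + 1) by
        (rewrite <- !RtoC_plus; f_equal; ring); ring.
    - rewrite L1, L2, L3, K; ring. }
  assert (E2 : z1 * z2 + z2 * z3 + z3 * z1 = - be).
  { apply Ceq_of_sub.
    transitivity ((z1 + z2) * (z1 + z2 + z3 - - be * (z1 * z2 * z3)) -
      z1 * z2 * (1 + be * (z1 * z2 + z2 * z3 + z3 * z1) + (2 * al)%R) - pair_poly al be z1 z2).
    - unfold pair_poly; ring.
    - rewrite E1, K, F12; ring. }
  split; [split; assumption|].
  rewrite E2 in K; apply RtoC_inj, Ceq_of_sub.
  rewrite RtoC_plus, RtoC_pow, <- K; ring.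
Qed.

Lemma pair_poly_of_billiard_triple k z1 z2 z3 :
  billiard_triple k z1 z2 z3 -> pair_poly ((k^2 - 1) / 2) k z1 z2 = 0.
Proof.
  intros [E1 E2].
  transitivity ((z1 + z2) * (z1 + z2 + z3 - - k * (z1 * z2 * z3)) -
    z1 * z2 * (1 + k * (z1 * z2 + z2 * z3 + z3 * z1) + (k^2 - 1)%R) -
    (z1 * z2 + z2 * z3 + z3 * z1 - - k)).
  - unfold pair_poly; replace (2 * ((k^2 - 1) / 2))%R with (k^2 - 1)%R by field; ring.
  - rewrite E1, E2, RtoC_minus, RtoC_pow; ring.
Qed.

Lemma pair_polys_of_billiard_triple k z1 z2 z3 : billiard_triple k z1 z2 z3 ->
  pair_poly ((k^2 - 1) / 2) k z1 z2 = 0 /\ pair_poly ((k^2 - 1) / 2) k z1 z3 = 0 /\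
  pair_poly ((k^2 - 1) / 2) k z2 z3 = 0.
Proof.
  intro H; pose proof (billiard_triple_rot _ _ _ _ H) as H'.
  pose proof (billiard_triple_rot _ _ _ _ H') as H''.
  rewrite (pair_poly_sym _ _ z3 z1).
  split; [|split]; eapply pair_poly_of_billiard_triple; eassumption.
Qed.

Definition billiard_cubic (k : R) (s z : C) : C := z * z * z + k * s * z * z - k * z - s.

Lemma billiard_triple_of_cubic_roots k s z1 z2 z3 : z1 <> z2 -> z1 <> z3 -> z2 <> z3 ->
  billiard_cubic k s z1 = 0 -> billiard_cubic k s z2 = 0 -> billiard_cubic k s z3 = 0 ->
  billiard_triple k z1 z2 z3 /\ z1 * z2 * z3 = s.
Proof.
  intros d12 d13 d23 f1 f2 f3.
  set (Q z w := z * z + z * w + w * w + k * s * (z + w) - k).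
  assert (HQ : forall z w, z <> w -> billiard_cubic k s z = 0 -> billiard_cubic k s w = 0 -> Q z w = 0).
  { intros z w Hne Fz Fw; apply (Cmult_sub_cancel_l z w); [exact Hne|].
    transitivity (billiard_cubic k s z - billiard_cubic k s w); [unfold Q, billiard_cubic; ring|].
    rewrite Fz, Fw; ring. }
  pose proof (HQ _ _ d12 f1 f2) as Q12; pose proof (HQ _ _ d13 f1 f3) as Q13.
  assert (E1 : z1 + z2 + z3 = - k * s).
  { apply Ceq_of_sub, (Cmult_sub_cancel_l z2 z3); [exact d23|].
    transitivity (Q z1 z2 - Q z1 z3); [unfold Q; ring | rewrite Q12, Q13; ring]. }
  assert (E2 : z1 * z2 + z2 * z3 + z3 * z1 = - k).
  { apply Ceq_of_sub; transitivity ((z1 + z2) * (z1 + z2 + z3 - - k * s) - Q z1 z2);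
      [unfold Q; ring | rewrite E1, Q12; ring]. }
  assert (E3 : z1 * z2 * z3 = s).
  { apply Ceq_of_sub.
    transitivity (billiard_cubic k s z1 - (z1 + z2 + z3 - - k * s) * z1 * z1 +
                  (z1 * z2 + z2 * z3 + z3 * z1 - - k) * z1);
      [unfold billiard_cubic; ring | rewrite f1, E1, E2; ring]. }
  split; [split|]; [rewrite E3 | |]; assumption.
Qed.

Close Scope C_scope.

(** * Characterization of the 3-periodics *)

Section Characterization.
Variables a b : R.
Hypotheses (hb : 0 < b) (hab : b < a).

Let k := billiard_k a b.

Lemma gap_ratio_of_pair_poly z w : on_circle z -> on_circle w -> z <> w ->
  pair_poly ((k^2 - 1) / 2) k z w = 0 -> gap_ratio a b z w = sqrt (k / (a^2 - b^2)).
Proof.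
  intros Hz Hw Hne H.
  assert (Hc : 0 < a^2 - b^2) by nra.
  pose proof (billiard_k_bounds a b hb hab) as Hk; fold k in Hk.
  assert (Kq := proj2 (billiard_k_spec a b hb hab k (proj1 Hk)) eq_refl); fold k in Kq.
  set (rho := k / (a^2 - b^2)).
  replace ((k^2 - 1) / 2) with (1 - rho * (a^2 + b^2)) in H 
    by (unfold rho; replace (k^2) with (3 - 2 * (a^2 + b^2) / (a^2 - b^2) * k) by lra; field; lra).
  replace k with (rho * (a^2 - b^2)) in H by (unfold rho; field; lra).
  apply pair_poly_ell_eq_0_iff in H; [|assumption..].
  assert (Hrho : 0 < rho) by (apply Rdiv_lt_0_compat; lra).
  apply gap_ratio_iff; try lra; try assumption.
  - apply sqrt_lt_R0; exact Hrho.
  - rewrite pow2_sqrt by lra; exact H.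
Qed.

Lemma three_periodic_ell_iff z1 z2 z3 : on_circle z1 -> on_circle z2 -> on_circle z3 ->
  three_periodic a b (ell a b z1) (ell a b z2) (ell a b z3) <->
  z1 <> z2 /\ z1 <> z3 /\ z2 <> z3 /\ billiard_triple k z1 z2 z3.
Proof.
  intros H1 H2 H3.
  assert (ha : 0 < a) by lra; assert (Hc : 0 < a^2 - b^2) by nra.
  pose proof (cross3_ell_sq a b z1 z2 z3 H1 H2 H3) as Cr.
  split.
  - intro TP; pose proof (proj1 TP) as Hnd; unfold non_degenerate in Hnd.
    assert (d12 : z1 <> z2) by (intros ->; apply Hnd; unfold cross3; ring).
    assert (d13 : z1 <> z3) by (intros ->; apply Hnd; unfold cross3; ring).
    assert (d23 : z2 <> z3) by (intros ->; apply Hnd; unfold cross3; ring).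
    apply three_periodic_ell_iff_ratios in TP as [R13 R23]; try assumption.
    set (r := gap_ratio a b z1 z2) in *.
    assert (Hr : 0 < r).
    { apply Rdiv_lt_0_compat; [apply gap_pos; assumption|].
      apply dist_pos; intro E; apply d12; apply (ell_injective a b); [lra | lra | exact E]. }
    assert (P : forall z w, on_circle z -> on_circle w -> z <> w -> gap_ratio a b z w = r ->
      pair_poly (1 - r^2 * (a^2 + b^2)) (r^2 * (a^2 - b^2)) z w = 0).
    { intros z w Hz Hw Hne E; apply pair_poly_ell_eq_0_iff; [assumption..|].
      apply gap_ratio_iff; try lra; assumption. }
    destruct (billiard_triple_of_pair_polys _ _ z1 z2 z3 d12 d13 d23
               (P _ _ H1 H2 d12 eq_refl) (P _ _ H1 H3 d13 R13) (P _ _ H2 H3 d23 R23))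
      as [Tr Hal].
    replace (r^2 * (a^2 - b^2)) with k in Tr; [tauto|].
    symmetry; apply billiard_k_spec; [assumption | assumption | apply Rmult_lt_0_compat; [apply pow_lt|]; lra |].
    rewrite <- Hal; field; lra.
  - intros (d12 & d13 & d23 & Tr).
    destruct (pair_polys_of_billiard_triple _ _ _ _ Tr) as (F12 & F13 & F23).
    apply three_periodic_ell_iff_ratios; try assumption.
    + intro E; rewrite E in Cr.
      pose proof (gap_pos _ _ H1 H2 d12); pose proof (gap_pos _ _ H1 H3 d13);
        pose proof (gap_pos _ _ H2 H3 d23).
      assert (0 < (a * b)^2) by (apply pow_lt; nra).
      assert (0 < 2 * (a * b)^2 * gap z1 z2 * gap z1 z3 * gap z2 z3)
        by (repeat apply Rmult_lt_0_compat; lra).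
      lra.
    + rewrite !gap_ratio_of_pair_poly by assumption; split; reflexivity.
Qed.

End Characterization.

(** * The Nagel point *)

Lemma center_nagel_scaled P1 P2 P3 t g1 g2 g3 : 0 < t -> 0 < g1 -> 0 < g2 -> 0 < g3 ->
  dist P2 P3 = g1 / t -> dist P3 P1 = g2 / t -> dist P1 P2 = g3 / t ->
  center nagel_h P1 P2 P3 =
  (((g2 + g3 - g1) * fst P1 + (g3 + g1 - g2) * fst P2 + (g1 + g2 - g3) * fst P3) / (g1 + g2 + g3),
   ((g2 + g3 - g1) * snd P1 + (g3 + g1 - g2) * snd P2 + (g1 + g2 - g3) * snd P3) / (g1 + g2 + g3)).
Proof.
  intros Ht H1 H2 H3 D1 D2 D3; unfold center, nagel_h; cbv zeta.
  rewrite D1, D2, D3; f_equal; field; repeat split; lra.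
Qed.

Open Scope C_scope.

Definition cgap (z w : C) : C := 1 - (z / w + w / z) / RtoC 2.

Lemma cgap_gap z w : on_circle z -> on_circle w -> RtoC (gap z w) = cgap z w.
Proof.
  intros Hz Hw; unfold cgap, Cdiv; rewrite !Cinv_on_circle by assumption.
  unfold gap; destruct z as [x y], w as [x' y'].
  cbv [Cmult Cplus Cminus Copp Cconj Cinv RtoC Re Im fst snd]; f_equal; field.
Qed.

Lemma nagel_weight_sums (k : R) (z1 z2 z3 : C) : z1 <> 0 -> z2 <> 0 -> z3 <> 0 ->
  billiard_triple k z1 z2 z3 ->
  cgap z1 z2 + cgap z1 z3 + cgap z2 z3 = ((9 - k^2) / 2)%R /\
  (cgap z1 z2 + cgap z1 z3 - cgap z2 z3) * z1 + (cgap z1 z2 + cgap z2 z3 - cgap z1 z3) * z2 +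
  (cgap z1 z3 + cgap z2 z3 - cgap z1 z2) * z3 =
  (k * (3 + k^2) / 2)%R * (z1 * z2 * z3) + (2 * k^2)%R / (z1 * z2 * z3).
Proof.
  intros n1 n2 n3 [E1 E2].
  assert (n123 : z1 * z2 * z3 <> 0) by (repeat apply Cmult_neq_0; assumption).
  assert (n2' : RtoC 2 <> 0) by (intro E; apply RtoC_inj in E; lra).
  set (e1 := z1 + z2 + z3) in *; set (e2 := z1 * z2 + z2 * z3 + z3 * z1) in *;
    set (e3 := z1 * z2 * z3) in *.
  assert (S : cgap z1 z2 + cgap z1 z3 + cgap z2 z3 = RtoC 3 - (e1 * e2 / e3 - RtoC 3) / RtoC 2).
  { unfold cgap, e1, e2, e3; field; repeat split; assumption. }
  split.
  - rewrite S, E1, E2, RtoC_div, RtoC_minus, RtoC_pow by lra.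
    field; repeat split; assumption.
  - transitivity ((RtoC 3 - (e1 * e2 / e3 - RtoC 3) / RtoC 2) * e1 - RtoC 2 * e1 +
                  RtoC 2 * (e2 * e2 - RtoC 2 * e1 * e3) / e3).
    + unfold cgap, e1, e2, e3; field; repeat split; assumption.
    + rewrite E1, E2, RtoC_div, !RtoC_mult, RtoC_plus, !RtoC_pow by lra.
      field; repeat split; assumption.
Qed.

Lemma on_circle_mult z w : on_circle z -> on_circle w -> on_circle (z * w).
Proof.
  unfold on_circle; destruct z as [x y], w as [x' y'].
  cbv [Cmult Re Im fst snd]; intros; nsatz_pow.
Qed.

Section NagelCenter.
Variables a b : R.
Hypotheses (hb : 0 < b) (hab : b < a).

Let k := billiard_k a b.

Lemma nagel_center_ell z1 z2 z3 : on_circle z1 -> on_circle z2 -> on_circle z3 ->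
  z1 <> z2 -> z1 <> z3 -> z2 <> z3 -> billiard_triple k z1 z2 z3 ->
  center nagel_h (ell a b z1) (ell a b z2) (ell a b z3) =
  ell (a * k * (1 + k) / (3 - k)) (b * k * (1 - k) / (3 + k)) (z1 * z2 * z3).
Proof.
  intros H1 H2 H3 d12 d13 d23 Tr.
  pose proof (billiard_k_bounds a b hb hab) as Hk; fold k in Hk.
  assert (Hc : (0 < a^2 - b^2)%R) by nra.
  set (r := sqrt (k / (a^2 - b^2))).
  assert (Hr : (0 < r)%R) by (apply sqrt_lt_R0, Rdiv_lt_0_compat; lra).
  assert (Dist : forall z w, on_circle z -> on_circle w -> z <> w ->
            pair_poly ((k^2 - 1) / 2) k z w = 0 -> dist (ell a b z) (ell a b w) = (gap z w / r)%R).
  { intros z w Hz Hw Hne F; pose proof (gap_ratio_of_pair_poly a b hb hab z w Hz Hw Hne F) as G.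
    fold k r in G; unfold gap_ratio in G; rewrite <- G.
    pose proof (gap_pos z w Hz Hw Hne).
    assert (0 < dist (ell a b z) (ell a b w))%R
      by (apply dist_pos; intro E; apply Hne, (ell_injective a b); [lra | lra | exact E]).
    field; lra. }
  destruct (pair_polys_of_billiard_triple _ _ _ _ Tr) as (F12 & F13 & F23).
  pose proof (gap_pos _ _ H1 H2 d12); pose proof (gap_pos _ _ H1 H3 d13);
    pose proof (gap_pos _ _ H2 H3 d23).
  rewrite (center_nagel_scaled _ _ _ r (gap z2 z3) (gap z1 z3) (gap z1 z2)); try assumption;
    [| apply Dist; assumption | rewrite dist_sym; apply Dist; assumption | apply Dist; assumption].
  destruct (nagel_weight_sums k z1 z2 z3) as [SW SZ]; try (apply on_circle_neq_0; assumption);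
    [assumption|].
  assert (Hs : on_circle (z1 * z2 * z3)) by (repeat apply on_circle_mult; assumption).
  unfold Cdiv in SZ; rewrite Cinv_on_circle in SZ by exact Hs.
  rewrite <- !cgap_gap in SW, SZ by assumption.
  rewrite <- !RtoC_plus in SW; apply RtoC_inj in SW.
  pose proof (f_equal Re SZ) as SX; pose proof (f_equal Im SZ) as SY; clear SZ.
  set (g12 := gap z1 z2) in *; set (g13 := gap z1 z3) in *; set (g23 := gap z2 z3) in *.
  remember (z1 * z2 * z3) as s eqn:Es; clear Es Hs.
  destruct z1 as [x1 y1], z2 as [x2 y2], z3 as [x3 y3], s as [u v].
  cbv [ell Re Im Cmult Cplus Cminus Copp Cconj RtoC fst snd] in SX, SY |- *.
  assert (SX' : ((g12 + g13 - g23) * x1 + (g12 + g23 - g13) * x2 + (g13 + g23 - g12) * x3 =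
                 (k * (3 + k^2) / 2 + 2 * k^2) * u)%R) by lra.
  assert (SY' : ((g12 + g13 - g23) * y1 + (g12 + g23 - g13) * y2 + (g13 + g23 - g12) * y3 =
                 (k * (3 + k^2) / 2 - 2 * k^2) * v)%R) by lra.
  f_equal.
  - transitivity (a * ((g12 + g13 - g23) * x1 + (g12 + g23 - g13) * x2 + (g13 + g23 - g12) * x3) /
                  (g12 + g13 + g23))%R; [field; lra|].
    rewrite SX', SW; field; lra.
  - transitivity (b * ((g12 + g13 - g23) * y1 + (g12 + g23 - g13) * y2 + (g13 + g23 - g12) * y3) /
                  (g12 + g13 + g23))%R; [field; lra|].
    rewrite SY', SW; field; lra.
Qed.

End NagelCenter.

(** * Existence of 3-periodics *)

Definition cis (t : R) : C := (cos t, sin t).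

Lemma cis_on_circle t : on_circle (cis t).
Proof. unfold on_circle, cis; cbn [Re Im fst snd]; rewrite <- (sin2_cos2 t); unfold Rsqr; ring. Qed.

Lemma cis_add t u : cis (t + u) = cis t * cis u.
Proof. unfold cis; rewrite cos_plus, sin_plus; cbv [Cmult fst snd]; f_equal; ring. Qed.

Lemma cis_opp t : cis (- t) = / cis t.
Proof.
  rewrite (Cinv_on_circle _ (cis_on_circle t)); unfold cis, Cconj; cbn [fst snd].
  rewrite cos_neg, sin_neg; reflexivity.
Qed.

Lemma cis_sub_opp t : cis t - cis (- t) = Ci * RtoC 2 * sin t.
Proof.
  unfold cis; rewrite cos_neg, sin_neg; cbv [Cmult Cminus Cplus Copp Ci RtoC fst snd]; f_equal; ring.
Qed.

Definition cubic_phase (k psi p : R) : R := (sin (3 * p - 2 * psi) + k * sin p)%R.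

Lemma billiard_cubic_cis k psi phi : cubic_phase k psi phi = 0%R ->
  billiard_cubic k (cis psi) (cis (2 * phi - psi)) = 0.
Proof.
  intro H.
  set (u := cis phi); set (v := cis psi).
  assert (nu : u <> 0) by apply on_circle_neq_0, cis_on_circle.
  assert (nv : v <> 0) by apply on_circle_neq_0, cis_on_circle.
  assert (Hz : cis (2 * phi - psi) = u * u / v).
  { replace (2 * phi - psi)%R with (phi + phi + - psi)%R by ring.
    rewrite !cis_add, cis_opp; reflexivity. }
  (* the cubic at [u^2 / v] is [u^3 / v] times [2 i (sin (3 phi - 2 psi) + k sin phi)] *)
  assert (Hs : Ci * RtoC 2 * (sin (3 * phi - 2 * psi) + k * sin phi)%R =
               u * u * u / (v * v) - v * v / (u * u * u) + k * (u - / u)).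
  { rewrite RtoC_plus, RtoC_mult, Cmult_plus_distr_l.
    replace (Ci * RtoC 2 * (k * sin phi)) with (k * (Ci * RtoC 2 * sin phi)) by ring.
    rewrite <- !cis_sub_opp.
    replace (3 * phi - 2 * psi)%R with (phi + phi + phi + - psi + - psi)%R by ring.
    replace (- (phi + phi + phi + - psi + - psi))%R with (- phi + - phi + - phi + psi + psi)%R by ring.
    rewrite !cis_add, !cis_opp; fold u v; field; split; assumption. }
  unfold cubic_phase in H; rewrite H, Cmult_0_r in Hs.
  rewrite Hz; unfold billiard_cubic.
  transitivity (u * u * u / v * (u * u * u / (v * v) - v * v / (u * u * u) + k * (u - / u))).
  - field; split; assumption.
  - rewrite <- Hs; ring.
Qed.

Lemma on_circle_cis s : on_circle s -> exists psi, s = cis psi.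
Proof.
  unfold on_circle, cis; destruct s as [x y]; cbn [Re Im fst snd]; intro H.
  assert (Hx : (-1 <= x <= 1)%R) by nra.
  assert (Hs : sqrt (1 - x²) = Rabs y).
  { replace (1 - x²)%R with (y²) by (unfold Rsqr; nra); apply sqrt_Rsqr_abs. }
  destruct (Rle_dec 0 y) as [Hy|Hy].
  - exists (acos x); rewrite cos_acos, sin_acos, Hs, Rabs_right by (assumption || lra); reflexivity.
  - exists (- acos x)%R; rewrite cos_neg, sin_neg, cos_acos, sin_acos, Hs, Rabs_left by (assumption || lra).
    f_equal; ring.
Qed.

Lemma cis_shift_neq t d : (0 < d < 2 * PI)%R -> cis (t + d) <> cis t.
Proof.
  intros Hd E; unfold cis in E; injection E as E1 E2.
  assert (C1 : cos d = 1%R).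
  { replace d with (t + d - t)%R by ring; rewrite cos_minus, E1, E2.
    rewrite <- (sin2_cos2 t); unfold Rsqr; ring. }
  replace d with (2 * (d / 2))%R in C1 by field; rewrite cos_2a_sin in C1.
  assert (0 < sin (d / 2))%R by (apply sin_gt_0; lra); nra.
Qed.

Close Scope C_scope.

Lemma cubic_phase_root k psi x y : x < y -> cubic_phase k psi x * cubic_phase k psi y < 0 ->
  exists p, x < p < y /\ cubic_phase k psi p = 0.
Proof.
  intros Hxy Hneg.
  assert (Hc : continuity (cubic_phase k psi)) by (unfold cubic_phase; reg).
  destruct (IVT_cor _ x y Hc (Rlt_le _ _ Hxy) (Rlt_le _ _ Hneg)) as [p [[Hx Hy] Hp]].
  exists p; split; [split | exact Hp].
  - destruct Hx as [Hx|Hx]; [exact Hx|]; subst x; rewrite Hp in Hneg; lra.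
  - destruct Hy as [Hy|Hy]; [exact Hy|]; subst y; rewrite Hp in Hneg; lra.
Qed.

Lemma cubic_phase_signs k psi : 0 <= k < 1 ->
  let p0 := (PI / 2 + 2 * psi) / 3 in
  0 < cubic_phase k psi p0 /\ cubic_phase k psi (p0 + PI / 3) < 0 /\
  0 < cubic_phase k psi (p0 + 2 * PI / 3) /\ cubic_phase k psi (p0 + PI) < 0.
Proof.
  intros Hk p0; unfold cubic_phase.
  replace (3 * p0 - 2 * psi) with (PI / 2) by (unfold p0; field).
  replace (3 * (p0 + PI / 3) - 2 * psi) with (PI / 2 + PI) by (unfold p0; field).
  replace (3 * (p0 + 2 * PI / 3) - 2 * psi) with (PI / 2 + PI + PI) by (unfold p0; field).
  replace (3 * (p0 + PI) - 2 * psi) with (PI / 2 + PI + PI + PI) by (unfold p0; field).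
  rewrite !neg_sin, sin_PI2.
  pose proof (SIN_bound p0); pose proof (SIN_bound (p0 + PI / 3));
    pose proof (SIN_bound (p0 + 2 * PI / 3)); pose proof (SIN_bound (p0 + PI)).
  repeat split; nra.
Qed.

Lemma billiard_triple_exists k s : 0 <= k < 1 -> on_circle s ->
  exists z1 z2 z3, on_circle z1 /\ on_circle z2 /\ on_circle z3 /\
    z1 <> z2 /\ z1 <> z3 /\ z2 <> z3 /\ billiard_triple k z1 z2 z3 /\ (z1 * z2 * z3)%C = s.
Proof.
  intros Hk Hs; destruct (on_circle_cis s Hs) as [psi ->].
  destruct (cubic_phase_signs k psi Hk) as (v0 & v1 & v2 & v3).
  set (p0 := (PI / 2 + 2 * psi) / 3) in *.
  pose proof PI_RGT_0.
  destruct (cubic_phase_root k psi p0 (p0 + PI / 3)) as (pa & Ia & Fa); [lra | nra |].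
  destruct (cubic_phase_root k psi (p0 + PI / 3) (p0 + 2 * PI / 3)) as (pb & Ib & Fb); [lra | nra |].
  destruct (cubic_phase_root k psi (p0 + 2 * PI / 3) (p0 + PI)) as (pc & Ic & Fc); [lra | nra |].
  assert (Neq : forall p q, p < q < p + PI -> cis (2 * p - psi) <> cis (2 * q - psi)).
  { intros p q Hpq E; apply (cis_shift_neq (2 * p - psi) (2 * (q - p))); [lra|].
    replace (2 * p - psi + 2 * (q - p)) with (2 * q - psi) by ring; symmetry; exact E. }
  assert (dab : cis (2 * pa - psi) <> cis (2 * pb - psi)) by (apply Neq; lra).
  assert (dac : cis (2 * pa - psi) <> cis (2 * pc - psi)) by (apply Neq; lra).
  assert (dbc : cis (2 * pb - psi) <> cis (2 * pc - psi)) by (apply Neq; lra).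
  destruct (billiard_triple_of_cubic_roots k (cis psi) _ _ _ dab dac dbc
              (billiard_cubic_cis _ _ _ Fa) (billiard_cubic_cis _ _ _ Fb)
              (billiard_cubic_cis _ _ _ Fc)) as [Tr Prod].
  exists (cis (2 * pa - psi)), (cis (2 * pb - psi)), (cis (2 * pc - psi)).
  pose proof (cis_on_circle (2 * pa - psi)); pose proof (cis_on_circle (2 * pb - psi));
    pose proof (cis_on_circle (2 * pc - psi)).
  tauto.
Qed.

Theorem theorem1 (a b : R) (hb : 0 < b) (hab : b < a) (X : pt) :
  locus a b nagel_h X <->
  on_ellipse ((b^2 - delta a b)^2 / (a * csq a b))
             ((a^2 - delta a b)^2 / (b * csq a b)) X.
Proof.
  assert (ha : 0 < a) by lra.
  pose proof (billiard_k_bounds a b hb hab) as Hk.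
  rewrite billiard_semiaxis_x, billiard_semiaxis_y, on_ellipse_iff_ell by
    (assumption || (apply Rdiv_lt_0_compat;
                    [apply Rmult_lt_0_compat; [apply Rmult_lt_0_compat|] |]; lra)).
  split.
  - intros (P1 & P2 & P3 & TP & <-).
    pose proof TP as (_ & E1 & E2 & E3 & _).
    apply on_ellipse_iff_ell in E1 as (z1 & H1 & ->), E2 as (z2 & H2 & ->),
      E3 as (z3 & H3 & ->); try assumption.
    apply three_periodic_ell_iff in TP as (d12 & d13 & d23 & Tr); try assumption.
    exists (z1 * z2 * z3)%C; split.
    + repeat apply on_circle_mult; assumption.
    + apply nagel_center_ell; assumption.
  - intros (s & Hs & ->).
    destruct (billiard_triple_exists (billiard_k a b) s) as
      (z1 & z2 & z3 & H1 & H2 & H3 & d12 & d13 & d23 & Tr & <-); [lra | exact Hs |].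
    exists (ell a b z1), (ell a b z2), (ell a b z3); split.
    + apply three_periodic_ell_iff; try assumption; tauto.
    + apply nagel_center_ell; assumption.
Qed.
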